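(* Let $X$ be a topological space and let $r:X\to A$ be a retraction onto a subspace $A\subseteq X$. Let $m\in A$ and $l\in X$. Then: (a) If the man has a strategy in $A$ for starting points $m$ (man) and $r(l)$ (lion), then the man has a strategy in $X$ for starting points $m$ (man) and $l$ (lion). (b) If the lion has a strategy in $X$ for starting points $m$ (man) and $l$ (lion), then the lion has a strategy in $A$ for starting points $m$ (man) and $r(l)$ (lion).
   Context: For a topological space $X$ and $x\in X$, let $P_x(X)$ be the set of continuous maps $\gamma:[0,+\infty)\to X$ with $\gamma(0)=x$. For $\gamma\in P_x(X)$ and $t\ge 0$, write $\gamma_{<t}=\gamma|_{[0,t)}$ and $\gamma_{\le t}=\gamma|_{[0,t]}$. Given starting points $m$ (man) and $l$ (lion) in a space $X$: a strategy for the man is a function $S:P_l(X)\to P_m(X)$ such that (i) $S(\beta)(t)\neq\beta(t)$ for all $\beta\in P_l(X)$ and $t\ge0$, and (ii) whenever $\beta,\beta'\in P_l(X)$ and $t\ge0$ satisfy $\beta_{<t}=\beta'_{<t}$, then $S(\beta)_{\le t}=S(\beta')_{\le t}$. A strategy for the lion is a function $S:P_m(X)\to P_l(X)$ such that (i) for each $\alpha\in P_m(X)$ there exists $t\ge 0$ with $S(\alpha)(t)=\alpha(t)$, and (ii) whenever $\alpha,\alpha'\in P_m(X)$ and $t\ge0$ satisfy $\alpha_{<t}=\alpha'_{<t}$, then $S(\alpha)_{\le t}=S(\alpha')_{\le t}$. A retraction $r:X\to A$ is a continuous map with $r(a)=a$ for all $a\in A$. *)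

From HB Require Import structures.
From mathcomp Require Import all_boot all_order all_algebra.
From mathcomp Require Import all_classical all_reals all_analysis.
Set Implicit Arguments. Unset Strict Implicit. Unset Printing Implicit Defensive.
Import Order.TTheory GRing.Theory Num.Theory numFieldNormedType.Exports.
Local Open Scope classical_set_scope.
Local Open Scope ring_scope.

(* Time is [0, +oo) inside a realType R.  A path is represented by a function
   R -> X; only its values on [0, +oo) matter. *)
Definition time (R : realType) : set R := [set t | 0 <= t].

(* gamma is an element of P_x(A): continuous on [0,+oo), starts at x,
   takes values in the subspace A (continuity into the subspace A is the
   same as continuity into X with image in A). *)
Definition path_in (R : realType) (X : topologicalType) (A : set X) (x : X)
  (g : R -> X) : Prop :=
  g 0 = x /\ {within @time R, continuous g} /\ (forall t, 0 <= t -> A (g t)).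

Definition causal (R : realType) (X : topologicalType) (A : set X) (x : X)
  (S : (R -> X) -> (R -> X)) : Prop :=
  forall b b' : R -> X, forall t : R, path_in A x b -> path_in A x b' -> 0 <= t ->
    (forall s, 0 <= s -> s < t -> b s = b' s) ->
    (forall s, 0 <= s -> s <= t -> S b s = S b' s).

Definition man_strategy (R : realType) (X : topologicalType) (A : set X)
  (m l : X) (S : (R -> X) -> (R -> X)) : Prop :=
  (forall b, path_in A l b -> path_in A m (S b)) /\
  (forall b, path_in A l b -> forall t, 0 <= t -> S b t <> b t) /\
  causal A l S.

Definition man_wins (R : realType) (X : topologicalType) (A : set X) (m l : X) : Prop :=
  exists S : (R -> X) -> (R -> X), man_strategy A m l S.

Definition lion_strategy (R : realType) (X : topologicalType) (A : set X)
  (m l : X) (S : (R -> X) -> (R -> X)) : Prop :=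
  (forall a, path_in A m a -> path_in A l (S a)) /\
  (forall a, path_in A m a -> exists t, 0 <= t /\ S a t = a t) /\
  causal A m S.

Definition lion_wins (R : realType) (X : topologicalType) (A : set X) (m l : X) : Prop :=
  exists S : (R -> X) -> (R -> X), lion_strategy A m l S.

(* r : X -> A is a retraction onto A, viewed as a map X -> X. *)
Definition retraction (X : topologicalType) (A : set X) (r : X -> X) : Prop :=
  continuous r /\ (forall x, A (r x)) /\ (forall a, A a -> r a = a).

From HB Require Import structures.
From mathcomp Require Import all_boot all_order all_algebra.
From mathcomp Require Import all_classical all_reals all_analysis.
Set Implicit Arguments. Unset Strict Implicit.
Local Open Scope classical_set_scope.

(* Both players transport their strategies through the retraction r.  The man
   in X runs his A-strategy against the shadow r o b of the lion: if he were
   caught at time t, then b t would be his own position, a point of A, hence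
   equal to its shadow, contradicting that he escapes the shadow.  The lion in
   A plays the shadow r o S a of his X-strategy; a man confined to A is fixed
   by r, so he is caught whenever the X-lion catches him. *)

Section Retraction.
Variables (R : realType) (X : topologicalType).
Implicit Types (A B : set X) (r : X -> X) (g : R -> X) (S : (R -> X) -> R -> X).

Lemma path_in_sub A B x g : A `<=` B -> path_in A x g -> path_in B x g.
Proof. by move=> AB [g0 [gc gA]]; split; last split=> // t /gA /AB. Qed.

Lemma path_in_comp A B r x g :
  continuous r -> (forall y, A (r y)) -> path_in B x g -> path_in A (r x) (r \o g).
Proof.
move=> rc rA [g0 [gc _]]; split; first by rewrite /= g0.
by split=> [t|t _]; [exact: continuous_comp (gc t) (rc _) | exact: rA].
Qed.

Lemma causal_sub A B x S : A `<=` B -> causal B x S -> causal A x S.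
Proof. by move=> AB SB b b' t /(path_in_sub AB) + /(path_in_sub AB); apply: SB. Qed.

Lemma causal_postcomp A x r S : causal A x S -> causal A x (fun a => r \o S a).
Proof. by move=> SA b b' t bA b'A t0 bb' s s0 st /=; rewrite (SA b b' t). Qed.

Lemma causal_precomp A B r x S :
  continuous r -> (forall y, A (r y)) ->
  causal A (r x) S -> causal B x (fun b => S (r \o b)).
Proof.
move=> rc rA SA b b' t bB b'B t0 bb'.
apply: SA (path_in_comp rc rA bB) (path_in_comp rc rA b'B) t0 _ => s s0 st.
by rewrite /= bb'.
Qed.

Lemma man_strategy_retract A B r m l S : retraction A r -> A `<=` B ->
  man_strategy A m (r l) S -> man_strategy B m l (fun b => S (r \o b)).
Proof.
move=> [rc [rA rid]] AB [Spath [Sescape Scausal]].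
have rbA b : path_in B l b -> path_in A (r l) (r \o b) := path_in_comp rc rA.
split; [|split].
- by move=> b /rbA /Spath /(path_in_sub AB).
- move=> b /rbA rb t t0 caught; apply: (Sescape _ rb t t0).
  have [_ [_ SA]] := Spath _ rb.
  by rewrite /= -caught rid //; exact: SA.
- exact: (causal_precomp rc rA Scausal).
Qed.

Lemma lion_strategy_retract A B r m l S : retraction A r -> A `<=` B ->
  lion_strategy B m l S -> lion_strategy A m (r l) (fun a => r \o S a).
Proof.
move=> [rc [rA rid]] AB [Spath [Scatch Scausal]]; split; [|split].
- by move=> a /(path_in_sub AB) /Spath /(path_in_comp rc rA).
- move=> a aA; have [t [t0 caught]] := Scatch _ (path_in_sub AB aA).
  have [_ [_ aA_t]] := aA.
  by exists t; split=> //=; rewrite caught rid //; exact: aA_t.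
- exact/causal_postcomp/(causal_sub AB).
Qed.

End Retraction.

Theorem mainTheorem6 (R : realType) (X : topologicalType) (A : set X)
  (r : X -> X) (m l : X) :
  retraction A r -> A m ->
  (man_wins R A m (r l) -> man_wins R setT m l) /\
  (lion_wins R setT m l -> lion_wins R A m (r l)).
Proof.
move=> ret _; split=> [[S winS] | [S winS]].
- by exists (fun b => S (r \o b)); exact: man_strategy_retract ret (subsetT A) winS.
- by exists (fun a => r \o S a); exact: lion_strategy_retract ret (subsetT A) winS.
Qed.
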